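(* Consider $J=2$ classes with sample sizes $n_1,n_2\ge 2$ and $n=n_1+n_2$. Suppose one of the following holds: (i) $\tilde h_b(1,2)>\tilde h_b(1,1)>\tilde h_b(2,2)$ and $n_1>n_2+1$; (ii) $\tilde h_b(1,2)>\tilde h_b(2,2)>\tilde h_b(1,1)$ and $n_1<n_2-1$; (iii) $\tilde h_b(1,1)>\tilde h_b(1,2)\ge\frac34\tilde h_b(1,1)+\frac14\tilde h_b(2,2)>\tilde h_b(2,2)$ and $n_1>1+\frac{n-1}{2}\Big\{\frac{\tilde h_b(1,1)-\tilde h_b(2,2)}{2\tilde h_b(1,2)-\tilde h_b(1,1)-\tilde h_b(2,2)}\Big\}$; (iv) $\tilde h_b(2,2)>\tilde h_b(1,2)\ge\frac14\tilde h_b(1,1)+\frac34\tilde h_b(2,2)>\tilde h_b(1,1)$ and $n_1<(n-1)\Big\{1-\frac12\frac{\tilde h_b(2,2)-\tilde h_b(1,1)}{2\tilde h_b(1,2)-\tilde h_b(1,1)-\tilde h_b(2,2)}\Big\}$. Then $\tilde\xi_b(1,2)>\max\{\tilde\tau_b(1,2),\tilde\tau_b(2,1)\}$.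
   Context: $\tilde h_b(l,l')$ ($l,l'\in\{1,2\}$) are real numbers with $\tilde h_b(1,2)=\tilde h_b(2,1)$ (in the paper, $\tilde h_b(l,l')=\phi\big[b^{-1}\sum_{i=1}^b\mathrm E\gamma(d_i^{-1}\|\mathbf U_i-\mathbf V_i\|^2)\big]$ for independent $\mathbf U\sim\mathbf F_l$, $\mathbf V\sim\mathbf F_{l'}$ with sub-vectors on clusters of coordinates). $\tilde\xi_b(1,2)=\tilde h_b(1,2)-\frac12[\tilde h_b(1,1)+\tilde h_b(2,2)]$; $\tilde\tau_b(1,2)=\frac{n_1}{n-1}|\tilde h_b(1,2)-\tilde h_b(1,1)|+\frac{n_2-1}{n-1}|\tilde h_b(1,2)-\tilde h_b(2,2)|$; $\tilde\tau_b(2,1)=\frac{n_1-1}{n-1}|\tilde h_b(1,2)-\tilde h_b(1,1)|+\frac{n_2}{n-1}|\tilde h_b(1,2)-\tilde h_b(2,2)|$. *)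

From Stdlib Require Import Reals.
Open Scope R_scope.

(* h11 = h~_b(1,1), h12 = h~_b(1,2) = h~_b(2,1), h22 = h~_b(2,2). *)
Definition xi12 (h11 h12 h22 : R) : R := h12 - (h11 + h22) / 2.

Definition tau12 (n1 n2 : nat) (h11 h12 h22 : R) : R :=
  let n := INR (n1 + n2) in
  INR n1 / (n - 1) * Rabs (h12 - h11) + (INR n2 - 1) / (n - 1) * Rabs (h12 - h22).

Definition tau21 (n1 n2 : nat) (h11 h12 h22 : R) : R :=
  let n := INR (n1 + n2) in
  (INR n1 - 1) / (n - 1) * Rabs (h12 - h11) + INR n2 / (n - 1) * Rabs (h12 - h22).

From Stdlib Require Import Reals Lra.
Open Scope R_scope.

(* With u = h12 - h11 and v = h12 - h22, xi12 is the midpoint (u + v) / 2 and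
   both tau's are weighted averages (p |u| + q |v|) / (p + q) with p + q = n - 1.
   Multiplying the gap by p + q gives (p - q) (v - u) / 2 when u, v >= 0, and
   p (u + v) - (p + q) (v - u) / 2 when u <= 0 <= v (symmetrically when
   v <= 0 <= u); each of the four hypotheses makes the relevant expression
   positive for both weight pairs (n1, n2 - 1) and (n1 - 1, n2). In (iii) and
   (iv) the 3/4-bounds serve only to make 2 h12 - h11 - h22 = u + v positive. *)

Definition wavg (p q u v : R) : R := (p * Rabs u + q * Rabs v) / (p + q).

Lemma wavg_sym (p q u v : R) : wavg p q u v = wavg q p v u.
Proof. unfold wavg; rewrite (Rplus_comm q p); f_equal; ring. Qed.

Lemma wavg_lt_mid_nonneg (p q u v : R) :
  0 < p + q -> 0 <= u -> 0 <= v -> 0 < (p - q) * (v - u) ->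
  wavg p q u v < (u + v) / 2.
Proof.
  intros Hpq Hu Hv Hgap; unfold wavg.
  rewrite (Rabs_pos_eq u Hu), (Rabs_pos_eq v Hv).
  assert (Hid : (u + v) / 2 - (p * u + q * v) / (p + q)
                = (p - q) * (v - u) / (2 * (p + q))) by (field; lra).
  assert (Hpos : 0 < (p - q) * (v - u) / (2 * (p + q))) by (apply Rdiv_lt_0_compat; lra).
  lra.
Qed.

Lemma wavg_lt_mid_nonpos_nonneg (p q u v : R) :
  0 < p + q -> u <= 0 -> 0 <= v -> (p + q) * (v - u) < 2 * p * (u + v) ->
  wavg p q u v < (u + v) / 2.
Proof.
  intros Hpq Hu Hv Hgap; unfold wavg.
  rewrite (Rabs_left1 u Hu), (Rabs_pos_eq v Hv).
  assert (Hid : (u + v) / 2 - (p * - u + q * v) / (p + q)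
                = (2 * p * (u + v) - (p + q) * (v - u)) / (2 * (p + q))) by (field; lra).
  assert (Hpos : 0 < (2 * p * (u + v) - (p + q) * (v - u)) / (2 * (p + q)))
    by (apply Rdiv_lt_0_compat; lra).
  lra.
Qed.

Lemma wavg_lt_mid_nonneg_nonpos (p q u v : R) :
  0 < p + q -> 0 <= u -> v <= 0 -> (p + q) * (u - v) < 2 * q * (u + v) ->
  wavg p q u v < (u + v) / 2.
Proof.
  intros Hpq Hu Hv Hgap.
  rewrite wavg_sym, (Rplus_comm u v).
  apply wavg_lt_mid_nonpos_nonneg; lra.
Qed.

Lemma mul_lt_of_half_div_lt (K d D r : R) :
  0 < D -> K / 2 * (d / D) < r -> K * d < 2 * r * D.
Proof.
  intros HD Hr.
  replace (K * d) with (2 * D * (K / 2 * (d / D))) by (field; lra).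
  nra.
Qed.

Lemma xi12_mid (h11 h12 h22 : R) :
  xi12 h11 h12 h22 = ((h12 - h11) + (h12 - h22)) / 2.
Proof. unfold xi12; field. Qed.

Lemma tau12_wavg (n1 n2 : nat) (h11 h12 h22 : R) :
  tau12 n1 n2 h11 h12 h22 = wavg (INR n1) (INR n2 - 1) (h12 - h11) (h12 - h22).
Proof.
  unfold tau12, wavg; rewrite plus_INR.
  replace (INR n1 + (INR n2 - 1)) with (INR n1 + INR n2 - 1) by ring.
  unfold Rdiv; ring.
Qed.

Lemma tau21_wavg (n1 n2 : nat) (h11 h12 h22 : R) :
  tau21 n1 n2 h11 h12 h22 = wavg (INR n1 - 1) (INR n2) (h12 - h11) (h12 - h22).
Proof.
  unfold tau21, wavg; rewrite plus_INR.
  replace (INR n1 - 1 + INR n2) with (INR n1 + INR n2 - 1) by ring.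
  unfold Rdiv; ring.
Qed.

Theorem lemmaA2 (n1 n2 : nat) (h11 h12 h22 : R) :
  (2 <= n1)%nat -> (2 <= n2)%nat ->
  let n := INR (n1 + n2) in
  ( (h12 > h11 /\ h11 > h22 /\ INR n1 > INR n2 + 1)
 \/ (h12 > h22 /\ h22 > h11 /\ INR n1 < INR n2 - 1)
 \/ (h11 > h12 /\ h12 >= 3/4 * h11 + 1/4 * h22 /\ 3/4 * h11 + 1/4 * h22 > h22 /\
     INR n1 > 1 + (n - 1) / 2 * ((h11 - h22) / (2 * h12 - h11 - h22)))
 \/ (h22 > h12 /\ h12 >= 1/4 * h11 + 3/4 * h22 /\ 1/4 * h11 + 3/4 * h22 > h11 /\
     INR n1 < (n - 1) * (1 - 1/2 * ((h22 - h11) / (2 * h12 - h11 - h22)))) ) ->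
  xi12 h11 h12 h22 > Rmax (tau12 n1 n2 h11 h12 h22) (tau21 n1 n2 h11 h12 h22).
Proof.
  intros Hn1 Hn2 n Hcases.
  apply le_INR in Hn1, Hn2; simpl in Hn1, Hn2.
  unfold n in Hcases; rewrite plus_INR in Hcases.
  rewrite xi12_mid, tau12_wavg, tau21_wavg.
  destruct Hcases as [(H1 & H2 & Hn) | [(H1 & H2 & Hn) |
                     [(H1 & H2 & H3 & Hn) | (H1 & H2 & H3 & Hn)]]].
  - apply Rmax_lub_lt; apply wavg_lt_mid_nonneg; nra.
  - apply Rmax_lub_lt; apply wavg_lt_mid_nonneg; nra.
  - assert (Hgap : (INR n1 + INR n2 - 1) * (h11 - h22)
                   < 2 * (INR n1 - 1) * (2 * h12 - h11 - h22))
      by (apply mul_lt_of_half_div_lt; lra).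
    apply Rmax_lub_lt; apply wavg_lt_mid_nonpos_nonneg; lra.
  - assert (Hgap : (INR n1 + INR n2 - 1) * (h22 - h11)
                   < 2 * (INR n2 - 1) * (2 * h12 - h11 - h22))
      by (apply mul_lt_of_half_div_lt; lra).
    apply Rmax_lub_lt; apply wavg_lt_mid_nonneg_nonpos; lra.
Qed.
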